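(* Consider the system $\dot x=-\nabla\psi(x)+Jx+Bu$ on $\mathbb R^n$, where $\psi:\mathbb R^n\to\mathbb R$ is continuously differentiable and strictly convex with $\lim_{\|x\|\to\infty}\psi(x)/\|x\|=\infty$, $J\in\mathbb R^{n\times n}$ is skew-symmetric, $B\in\mathbb R^{n\times m}$, and the input $u\in\mathbb R^m$ is constant. Then there exists a unique point $x_0\in\mathbb R^n$ (depending on $u$) such that every solution $x(t)$ of the system converges to $x_0$ as $t\to\infty$. *)

From Stdlib Require Import Reals.
From mathcomp Require Import ssreflect ssrfun ssrbool eqtype ssrnat seq fintype bigop.
Set Implicit Arguments. Unset Strict Implicit. Unset Printing Implicit Defensive.
Open Scope R_scope.

Definition vec (n : nat) := 'I_n -> R.
Definition mat (n m : nat) := 'I_n -> 'I_m -> R.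

Definition vdot {n} (x y : vec n) : R := \big[Rplus/0]_(i < n) (x i * y i).
Definition vnorm {n} (x : vec n) : R := sqrt (vdot x x).
Definition vadd {n} (x y : vec n) : vec n := fun i => x i + y i.
Definition vsub {n} (x y : vec n) : vec n := fun i => x i - y i.
Definition vscale {n} (a : R) (x : vec n) : vec n := fun i => a * x i.
Definition mxv {n m} (A : mat n m) (v : vec m) : vec n :=
  fun i => \big[Rplus/0]_(j < m) (A i j * v j).

Definition has_gradient {n} (f : vec n -> R) (x g : vec n) : Prop :=
  forall eps, 0 < eps -> exists delta, 0 < delta /\
    forall h : vec n, vnorm h < delta ->
      Rabs (f (vadd x h) - f x - vdot g h) <= eps * vnorm h.

Definition vcontinuous {n} (F : vec n -> vec n) : Prop :=
  forall x eps, 0 < eps -> exists delta, 0 < delta /\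
    forall y, vnorm (vsub y x) < delta -> vnorm (vsub (F y) (F x)) < eps.

Definition C1_with_gradient {n} (f : vec n -> R) (grad : vec n -> vec n) : Prop :=
  (forall x, has_gradient f x (grad x)) /\ vcontinuous grad.

Definition strictly_convex {n} (f : vec n -> R) : Prop :=
  forall x y : vec n, x <> y -> forall l, 0 < l < 1 ->
    f (vadd (vscale l x) (vscale (1 - l) y)) < l * f x + (1 - l) * f y.

Definition superlinear {n} (f : vec n -> R) : Prop :=
  forall M, exists r, 0 <= r /\ forall x, r < vnorm x -> M < f x / vnorm x.

Definition skew {n} (J : mat n n) : Prop := forall i j, J i j = - J j i.

Definition is_solution {n m} (grad : vec n -> vec n) (J : mat n n) (B : mat n m)
    (u : vec m) (t0 : R) (x : R -> vec n) : Prop :=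
  forall t, t0 < t -> forall i : 'I_n,
    derivable_pt_lim (fun s => x s i) t (- grad (x t) i + mxv J (x t) i + mxv B u i).

Definition converges_to {n} (x : R -> vec n) (x0 : vec n) : Prop :=
  forall eps, 0 < eps -> exists T, forall t, T <= t -> vnorm (vsub (x t) x0) < eps.

From Stdlib Require Import Reals Lra Lia ClassicalEpsilon FunctionalExtensionality Classical.
From HB Require Import structures.
From mathcomp Require Import ssreflect ssrfun ssrbool eqtype ssrnat seq fintype bigop.
From mathcomp Require Import zify.
Set Warnings "-notation-overridden -redundant-canonical-projection".
Set Implicit Arguments. Unset Strict Implicit.
Open Scope R_scope.

(* Put phi x := psi x - <Bu, x>: it is again C^1, strictly convex and superlinear, and the
   equilibria are the solutions of grad phi x = J x.  Minimizing phi - <w, .> shows that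
   grad phi is onto, so the Legendre transform phi* is attained; a minimizer of the coercive,
   lower semicontinuous H x := phi x + phi* (J x) is an equilibrium by Danskin's first-order
   condition and the skewness of J.  Around an equilibrium xs, V := |x - xs|^2 has derivative
   -2 <grad psi x - grad psi xs, x - xs> <= 0 (the J-term vanishes), and this is bounded away
   from 0 on bounded sets away from xs, so V -> 0.  The constant solution xs makes the limit
   unique. *)

(** * Finite sums and Euclidean vectors *)

HB.instance Definition _ := Monoid.isComLaw.Build R 0 Rplus
  (fun a b c : R => esym (Rplus_assoc a b c)) Rplus_comm Rplus_0_l.

Local Notation "\sum_ ( i < n ) F" := (\big[Rplus/0]_(i < n) F).

Lemma sumR_add n (F G : 'I_n -> R) :
  \sum_(i < n) (F i + G i) = \sum_(i < n) F i + \sum_(i < n) G i.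
Proof. exact: big_split. Qed.

Lemma sumR_mull n a (F : 'I_n -> R) : \sum_(i < n) (a * F i) = a * \sum_(i < n) F i.
Proof. by rewrite (big_morph (Rmult a) (Rmult_plus_distr_l a) (Rmult_0_r a)). Qed.

Lemma sumR_mulr n a (F : 'I_n -> R) : \sum_(i < n) (F i * a) = (\sum_(i < n) F i) * a.
Proof. by rewrite (big_morph (Rmult^~ a) (fun x y => Rmult_plus_distr_r x y a) (Rmult_0_l a)). Qed.

Lemma sumR_opp n (F : 'I_n -> R) : \sum_(i < n) (- F i) = - \sum_(i < n) F i.
Proof. by rewrite (big_morph Ropp Ropp_plus_distr Ropp_0). Qed.

Lemma sumR_le n (F G : 'I_n -> R) : (forall i, F i <= G i) ->
  \sum_(i < n) F i <= \sum_(i < n) G i.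
Proof. by move=> FG; apply: big_ind2 => [|x1 x2 y1 y2|i _]; [lra|lra|]. Qed.

Lemma sumR_ge0 n (F : 'I_n -> R) : (forall i, 0 <= F i) -> 0 <= \sum_(i < n) F i.
Proof. by move=> F0; apply: big_ind => [|x y|i _]; [lra|lra|]. Qed.

Lemma sumR_ge_term n (F : 'I_n -> R) j : (forall i, 0 <= F i) -> F j <= \sum_(i < n) F i.
Proof.
move=> F0; rewrite (bigD1 j) //= -{1}(Rplus_0_r (F j)); apply: Rplus_le_compat_l.
by apply: big_ind => [|x y|i _]; [lra|lra|].
Qed.

Lemma sumR_const n c : \sum_(i < n) c = INR n * c.
Proof.
rewrite big_const_ord; elim: n => [|n IH]; first by rewrite /=; ring.
by rewrite S_INR /= IH; ring.
Qed.

Lemma lt_Rmin_div d c K y : 0 < K -> y < Rmin d (c / K) -> y < d /\ K * y < c.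
Proof.
move=> K0 y_lt; split; first exact: Rlt_le_trans y_lt (Rmin_l _ _).
have := Rmult_lt_compat_l K _ _ K0 (Rlt_le_trans _ _ _ y_lt (Rmin_r d (c / K))).
by rewrite (_ : K * (c / K) = c) //; field; lra.
Qed.

Lemma Rmin_div_pos d c K : 0 < d -> 0 < c -> 0 < K -> 0 < Rmin d (c / K).
Proof. by move=> d0 c0 K0; apply: Rmin_pos => //; apply: Rdiv_lt_0_compat. Qed.

Definition vzero {n} : vec n := fun=> 0.

Ltac vext := apply: functional_extensionality => ?; rewrite /vadd /vsub /vscale /vzero; ring.

Section VectorAlgebra.
Variable n : nat.
Implicit Types x y z : vec n.

Lemma vdotC x y : vdot x y = vdot y x.
Proof. by rewrite /vdot; apply: eq_bigr => i _; ring. Qed.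

Lemma vdotDl x y z : vdot (vadd x y) z = vdot x z + vdot y z.
Proof. by rewrite /vdot -sumR_add; apply: eq_bigr => i _; rewrite /vadd; ring. Qed.

Lemma vdotBl x y z : vdot (vsub x y) z = vdot x z - vdot y z.
Proof.
by rewrite /vdot /Rminus -sumR_opp -sumR_add; apply: eq_bigr => i _; rewrite /vsub; ring.
Qed.

Lemma vdotZl a x z : vdot (vscale a x) z = a * vdot x z.
Proof. by rewrite /vdot -sumR_mull; apply: eq_bigr => i _; rewrite /vscale; ring. Qed.

Lemma vdot0l x : vdot vzero x = 0.
Proof. by rewrite /vdot big1 // => i _; rewrite /vzero; ring. Qed.

Lemma vdotDr x y z : vdot z (vadd x y) = vdot z x + vdot z y.
Proof. by rewrite vdotC vdotDl !(vdotC z). Qed.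

Lemma vdotBr x y z : vdot z (vsub x y) = vdot z x - vdot z y.
Proof. by rewrite vdotC vdotBl !(vdotC z). Qed.

Lemma vdotZr a x z : vdot z (vscale a x) = a * vdot z x.
Proof. by rewrite vdotC vdotZl (vdotC x). Qed.

Lemma vdot0r x : vdot x vzero = 0.
Proof. by rewrite vdotC vdot0l. Qed.

Lemma vdot_ge0 x : 0 <= vdot x x.
Proof. by apply: sumR_ge0 => i; nra. Qed.

Lemma sqr_coord_le_vdot x i : x i * x i <= vdot x x.
Proof. by apply: (@sumR_ge_term n (fun i => x i * x i)) => j; nra. Qed.

Lemma vnorm_ge0 x : 0 <= vnorm x.
Proof. exact: sqrt_pos. Qed.

Lemma vnorm_sqr x : vnorm x * vnorm x = vdot x x.
Proof. exact/sqrt_sqrt/vdot_ge0. Qed.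

Lemma vnorm0 : vnorm (@vzero n) = 0.
Proof. by rewrite /vnorm vdot0r sqrt_0. Qed.

Lemma vnorm_eq0 x : vnorm x = 0 -> x = vzero.
Proof.
move=> x0; apply: functional_extensionality => i; rewrite /vzero.
by have := sqr_coord_le_vdot x i; rewrite -vnorm_sqr x0; nra.
Qed.

Lemma vsub_eq0 x y : vsub x y = vzero -> x = y.
Proof.
by move=> xy0; apply: functional_extensionality => i; have := f_equal (fun v => v i) xy0;
  rewrite /vsub /vzero; lra.
Qed.

Lemma abs_coord_le_vnorm x i : Rabs (x i) <= vnorm x.
Proof. by rewrite -sqrt_Rsqr_abs; apply/sqrt_le_1_alt/sqr_coord_le_vdot. Qed.

Lemma vnorm_le x c : 0 <= c -> vdot x x <= c * c -> vnorm x <= c.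
Proof. by move=> c0 le_xc; rewrite -(sqrt_square c) //; apply: sqrt_le_1_alt. Qed.

Lemma vnorm_lt x c : 0 <= c -> vdot x x < c * c -> vnorm x < c.
Proof.
by move=> c0 lt_xc; rewrite -(sqrt_square c) //; apply: sqrt_lt_1_alt; split => //; apply: vdot_ge0.
Qed.

Lemma vnorm_le_coord x d : 0 <= d -> (forall i, Rabs (x i) <= d) ->
  vdot x x <= INR n * (d * d).
Proof.
move=> d0 xd; rewrite /vdot -sumR_const; apply: sumR_le => i.
rewrite -(Rabs_pos_eq (x i * x i)) ?Rabs_mult; last by nra.
by have := xd i; have := Rabs_pos (x i); nra.
Qed.

Lemma Cauchy_Schwarz x y : Rabs (vdot x y) <= vnorm x * vnorm y.
Proof.
have key : vdot x y * vdot x y <= vdot x x * vdot y y.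
  have yy0 := vdot_ge0 y.
  case: (Req_dec (vdot y y) 0) => [yy_eq0|yy_neq0].
    have -> : y = vzero by apply: vnorm_eq0; rewrite /vnorm yy_eq0 sqrt_0.
    by rewrite !vdot0r; nra.
  have := vdot_ge0 (vsub (vscale (vdot y y) x) (vscale (vdot x y) y)).
  by rewrite !(vdotBl, vdotBr, vdotZl, vdotZr) (vdotC y x); nra.
apply: Rsqr_incr_0_var; last by apply: Rmult_le_pos; apply: vnorm_ge0.
by rewrite -Rsqr_abs /Rsqr; rewrite -!vnorm_sqr in key; nra.
Qed.

Lemma vdot_le_vnorm x y : vdot x y <= vnorm x * vnorm y.
Proof. by have := Cauchy_Schwarz x y; have := Rle_abs (vdot x y); lra. Qed.

Lemma vnorm_triangle x y : vnorm (vadd x y) <= vnorm x + vnorm y.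
Proof.
have := vnorm_ge0 x; have := vnorm_ge0 y; have := vdot_le_vnorm x y.
move=> *; apply: vnorm_le; first lra.
by rewrite !(vdotDl, vdotDr) (vdotC y x) -!vnorm_sqr; nra.
Qed.

Lemma vnormZ a x : vnorm (vscale a x) = Rabs a * vnorm x.
Proof.
rewrite /vnorm vdotZl vdotZr -Rmult_assoc sqrt_mult_alt; last by nra.
by rewrite -/(Rsqr a) sqrt_Rsqr_abs.
Qed.

Lemma vnorm_subC x y : vnorm (vsub x y) = vnorm (vsub y x).
Proof.
have -> : vsub x y = vscale (-1) (vsub y x) by vext.
by rewrite vnormZ Rabs_Ropp Rabs_R1 Rmult_1_l.
Qed.

Lemma vnorm_sub_triangle x y z : vnorm (vsub x z) <= vnorm (vsub x y) + vnorm (vsub y z).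
Proof.
have -> : vsub x z = vadd (vsub x y) (vsub y z) by vext.
exact: vnorm_triangle.
Qed.

Lemma vnorm_le_sub x y : vnorm x <= vnorm (vsub x y) + vnorm y.
Proof.
have {1}-> : x = vadd (vsub x y) y by vext.
exact: vnorm_triangle.
Qed.

Lemma vnorm_sub_le x y : vnorm (vsub x y) <= vnorm x + vnorm y.
Proof.
have -> : vsub x y = vadd x (vscale (-1) y) by vext.
by rewrite -[vnorm y]Rmult_1_l -Rabs_R1 -Rabs_Ropp -vnormZ; apply: vnorm_triangle.
Qed.

Lemma vnorm_sub_sub x y x' y' :
  vnorm (vsub (vsub x y) (vsub x' y')) <= vnorm (vsub x x') + vnorm (vsub y y').
Proof.
have -> : vsub (vsub x y) (vsub x' y') = vsub (vsub x x') (vsub y y') by vext.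
exact: vnorm_sub_le.
Qed.

End VectorAlgebra.

Lemma converges_to_const_eq n (a b : vec n) : converges_to (fun=> a) b -> b = a.
Proof.
move=> a_to_b; suff /vnorm_eq0/vsub_eq0 -> : vnorm (vsub a b) = 0 by [].
apply: Rle_antisym; last exact: vnorm_ge0.
by apply: Rnot_lt_le => /a_to_b[T close]; have := close T (Rle_refl T); lra.
Qed.

Section MatrixVector.
Variables n m : nat.
Variable A : mat n m.

Lemma mxvD x y : mxv A (vadd x y) = vadd (mxv A x) (mxv A y).
Proof.
apply: functional_extensionality => i; rewrite /mxv /vadd -sumR_add.
by apply: eq_bigr => j _; ring.
Qed.

Lemma mxvB x y : mxv A (vsub x y) = vsub (mxv A x) (mxv A y).
Proof.
apply: functional_extensionality => i; rewrite /mxv /vsub /Rminus -sumR_opp -sumR_add.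
by apply: eq_bigr => j _; ring.
Qed.

Lemma mxvZ a x : mxv A (vscale a x) = vscale a (mxv A x).
Proof.
apply: functional_extensionality => i; rewrite /mxv /vscale -sumR_mull.
by apply: eq_bigr => j _; ring.
Qed.

End MatrixVector.

Section SkewSymmetric.
Variable n : nat.
Variable J : mat n n.
Hypothesis J_skew : skew J.

Lemma skew_vdot_mxv x y : vdot x (mxv J y) = - vdot (mxv J x) y.
Proof.
rewrite /vdot /mxv -sumR_opp.
under eq_bigr => i _ do rewrite -sumR_mull.
under [RHS]eq_bigr => i _ do rewrite -sumR_mulr -sumR_opp.
rewrite exchange_big; apply: eq_bigr => i _; apply: eq_bigr => j _.
by rewrite (J_skew j i); ring.
Qed.

Lemma skew_vdot_mxv_self x : vdot x (mxv J x) = 0.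
Proof. by have := skew_vdot_mxv x x; rewrite (vdotC (mxv J x)); lra. Qed.

End SkewSymmetric.

(** * Sequential compactness *)

Lemma inv_INR_succ_lt eps : 0 < eps ->
  exists N : nat, forall k : nat, (N <= k)%N -> / (INR k + 1) < eps.
Proof.
move=> eps0; have [N [N0 invN_lt]] := archimed_cor1 eps eps0.
exists N => k le_Nk.
have : INR N <= INR k by apply: le_INR; lia.
have : 0 < INR N by apply: lt_0_INR; lia.
by move=> *; apply: (Rle_lt_trans _ (/ INR N)) => //; apply: Rinv_le_contravar; lra.
Qed.

Lemma strict_homo_ge_id (s : nat -> nat) : {homo s : a b / (a < b)%N} -> forall k, (k <= s k)%N.
Proof. by move=> s_incr; elim=> // k IH; apply: leq_ltn_trans IH (s_incr _ _ (ltnSn k)). Qed.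

Lemma Bolzano_Weierstrass_subseq (u : nat -> R) M : (forall k, Rabs (u k) <= M) ->
  exists (s : nat -> nat) l, {homo s : a b / (a < b)%N} /\
    forall eps, 0 < eps -> exists N, forall k, (N <= k)%N -> Rabs (u (s k) - l) < eps.
Proof.
move=> uM.
have u_in : forall k, -M <= u k <= M.
  by move=> k; have := uM k; have := Rle_abs (u k); have := Rle_abs (- u k); rewrite Rabs_Ropp; lra.
have [l l_adh] := @Bolzano_Weierstrass u _ (compact_P3 (-M) M) u_in.
have close_after : forall Nk : nat * nat,
    exists p, (Nk.1 <= p)%N /\ Rabs (u p - l) < / (INR Nk.2 + 1).
  move=> [N k]; have k0 : 0 < / (INR k + 1) by apply: Rinv_0_lt_compat; have := pos_INR k; lra.
  have nbh : neighbourhood (fun y => Rabs (y - l) < / (INR k + 1)) l.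
    by exists (mkposreal _ k0).
  by have [p [/leP le_Np close_p]] := l_adh _ N nbh; exists p.
have [pick pickP] := choice _ close_after.
(* the k-th index is picked after the (k-1)-th one, within 1/(k+1) of l *)
pose fix s k := if k is k'.+1 then pick ((s k').+1, k) else pick (0, 0)%N.
exists s, l; split.
  by apply: homo_ltn => [? ? ? /ltn_trans|k]; [apply|exact: (pickP ((s k).+1, k.+1)).1].
move=> eps eps0; have [N invN] := inv_INR_succ_lt eps0; exists N => k le_Nk.
have : Rabs (u (s k) - l) < / (INR k + 1) by case: k le_Nk => [|k] _; apply: (pickP (_, _)).2.
by have := invN k le_Nk; lra.
Qed.

Section VectorSequences.
Variable n : nat.

Definition vseq_cv (y : nat -> vec n) (l : vec n) :=
  forall eps, 0 < eps -> exists N, forall k, (N <= k)%N -> vnorm (vsub (y k) l) < eps.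

Lemma vseq_cv_coord (y : nat -> vec n) l :
  (forall eps, 0 < eps -> exists N, forall k, (N <= k)%N -> forall i, Rabs (y k i - l i) < eps) ->
  vseq_cv y l.
Proof.
move=> coord_cv eps eps0; have n0 := pos_INR n.
pose e := eps / (INR n + 1).
have e0 : 0 < e by apply: Rdiv_lt_0_compat; lra.
have [N close] := coord_cv e e0; exists N => k le_Nk; apply: vnorm_lt; first lra.
apply: Rle_lt_trans (vnorm_le_coord (Rlt_le _ _ e0) (fun i => Rlt_le _ _ (close k le_Nk i))) _.
have eps_e : eps = e * (INR n + 1) by rewrite /e; field; lra.
by rewrite eps_e; nra.
Qed.

Lemma Bolzano_Weierstrass_vec (y : nat -> vec n) M : (forall k, vnorm (y k) <= M) ->
  exists (s : nat -> nat) l, {homo s : a b / (a < b)%N} /\ vseq_cv (fun k => y (s k)) l.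
Proof.
move=> yM.
have coords_cv : forall K, exists (s : nat -> nat) (l : vec n), {homo s : a b / (a < b)%N} /\
    forall eps, 0 < eps -> exists N, forall k, (N <= k)%N ->
      forall i : 'I_n, (i < K)%N -> Rabs (y (s k) i - l i) < eps.
  elim=> [|K [s [l [s_incr cv]]]].
    by exists id, vzero; split => // eps _; exists 0%N.
  case: (ltnP K n) => [ltKn|le_nK]; last first.
    exists s, l; split => // eps /cv[N close]; exists N => k /close close_k i _.
    by apply: close_k; have := ltn_ord i; lia.
  pose iK : 'I_n := Ordinal ltKn.
  have [s' [lK [s'_incr cvK]]] := @Bolzano_Weierstrass_subseq (fun k => y (s k) iK) M
    (fun k => Rle_trans _ _ _ (abs_coord_le_vnorm (y (s k)) iK) (yM (s k))).
  exists (s \o s'), (fun i => if nat_of_ord i == K then lK else l i); split.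
    by move=> a b /s'_incr /s_incr.
  move=> eps eps0; have [N close] := cv eps eps0; have [NK closeK] := cvK eps eps0.
  exists (maxn N NK) => k le_k i lt_iK /=; case: eqP => [iK_eq|iK_neq].
    by rewrite (_ : i = iK); [apply: closeK; lia|apply: val_inj].
  by apply: close; [have := strict_homo_ge_id s'_incr k; lia|lia].
have [s [l [s_incr cv]]] := coords_cv n.
exists s, l; split => //; apply: vseq_cv_coord => eps /cv[N close].
by exists N => k /close close_k i; apply: close_k.
Qed.

Lemma vseq_cv_subseq (y : nat -> vec n) l (s : nat -> nat) :
  {homo s : a b / (a < b)%N} -> vseq_cv y l -> vseq_cv (fun k => y (s k)) l.
Proof.
move=> s_incr cv eps /cv[N close]; exists N => k le_Nk.
by apply: close; have := strict_homo_ge_id s_incr k; lia.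
Qed.

Lemma vseq_cv_vnorm_le (y : nat -> vec n) l M :
  (forall k, vnorm (y k) <= M) -> vseq_cv y l -> vnorm l <= M.
Proof.
move=> yM cv; apply: Rnot_lt_le => lt_Ml.
have [N close] := cv (vnorm l - M) ltac:(lra).
have := close N (leqnn N); have := vnorm_le_sub l (y N); have := yM N.
by rewrite (vnorm_subC l); lra.
Qed.

Lemma vseq_cv_continuous (g : vec n -> vec n) y l :
  vcontinuous g -> vseq_cv y l -> vseq_cv (fun k => g (y k)) (g l).
Proof.
move=> g_cont cv eps /(g_cont l)[d [d0 g_close]].
by have [N close] := cv d d0; exists N => k /close /g_close.
Qed.

Lemma vseq_cv_sub (a b : nat -> vec n) a0 b0 : vseq_cv a a0 -> vseq_cv b b0 ->
  vseq_cv (fun k => vsub (a k) (b k)) (vsub a0 b0).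
Proof.
move=> cv_a cv_b eps eps0.
have [Na close_a] := cv_a (eps / 2) ltac:(lra); have [Nb close_b] := cv_b (eps / 2) ltac:(lra).
exists (maxn Na Nb) => k le_k.
have := close_a k ltac:(lia); have := close_b k ltac:(lia).
by have := vnorm_sub_sub (a k) (b k) a0 b0; lra.
Qed.

Lemma vseq_cv_vdot (p q : nat -> vec n) p0 q0 : vseq_cv p p0 -> vseq_cv q q0 ->
  forall eps, 0 < eps -> exists N, forall k, (N <= k)%N ->
    Rabs (vdot (p k) (q k) - vdot p0 q0) < eps.
Proof.
move=> cv_p cv_q eps eps0.
pose K := 2 * (vnorm p0 + vnorm q0 + 1).
have K0 : 0 < K by have := vnorm_ge0 p0; have := vnorm_ge0 q0; rewrite /K; lra.
have e0 : 0 < Rmin 1 (eps / K) by apply: Rmin_div_pos; lra.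
have [Np close_p] := cv_p _ e0; have [Nq close_q] := cv_q _ e0.
exists (maxn Np Nq) => k le_k.
have [p_1 p_K] := lt_Rmin_div K0 (close_p k ltac:(lia)).
have [q_1 q_K] := lt_Rmin_div K0 (close_q k ltac:(lia)).
have -> : vdot (p k) (q k) - vdot p0 q0 = vdot (vsub (p k) p0) (q k) + vdot p0 (vsub (q k) q0).
  by rewrite vdotBl vdotBr; ring.
have := Rabs_triang (vdot (vsub (p k) p0) (q k)) (vdot p0 (vsub (q k) q0)).
have := Cauchy_Schwarz (vsub (p k) p0) (q k); have := Cauchy_Schwarz p0 (vsub (q k) q0).
have := vnorm_le_sub (q k) q0.
have := vnorm_ge0 (vsub (p k) p0); have := vnorm_ge0 (vsub (q k) q0).
have := vnorm_ge0 p0; have := vnorm_ge0 q0.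
by rewrite /K in p_K q_K; nra.
Qed.

End VectorSequences.

Definition scalar_continuous n (f : vec n -> R) : Prop :=
  forall x eps, 0 < eps ->
    exists d, 0 < d /\ forall y, vnorm (vsub y x) < d -> Rabs (f y - f x) < eps.

Definition lower_semicontinuous n (f : vec n -> R) : Prop :=
  forall x eps, 0 < eps -> exists d, 0 < d /\ forall y, vnorm (vsub y x) < d -> f x < f y + eps.

Lemma coercive_lsc_attains_min n (f : vec n -> R) r c : 0 <= r ->
  (forall x, vnorm x <= r -> c <= f x) ->
  (forall x, r < vnorm x -> f vzero <= f x) ->
  lower_semicontinuous f ->
  exists xm, forall x, f xm <= f x.
Proof.
move=> r0 f_ge_c f_ge_f0 f_lsc.
pose E y := exists x, vnorm x <= r /\ y = - f x.
have E_bound : bound E by exists (- c) => y [x [x_r ->]]; have := f_ge_c x x_r; lra.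
have E_inh : exists y, E y by exists (- f vzero), vzero; rewrite vnorm0.
have [L [L_ub L_least]] := completeness E E_bound E_inh.
have inf_le : forall x, vnorm x <= r -> - L <= f x.
  by move=> x x_r; have := L_ub (- f x) (ex_intro _ x (conj x_r erefl)); lra.
have near_inf : forall k : nat, exists x, vnorm x <= r /\ f x < - L + / (INR k + 1).
  move=> k; apply: NNPP => no_x.
  have : L <= L - / (INR k + 1).
    apply: L_least => y [x [x_r ->]]; apply: Rnot_lt_le => lt_fx.
    by apply: no_x; exists x; split => //; lra.
  by have := pos_INR k; have := Rinv_0_lt_compat (INR k + 1); lra.
have [xs xsP] := choice _ near_inf.
have [s [xm [s_incr cv]]] := Bolzano_Weierstrass_vec (fun k => (xsP k).1).
have xm_r : vnorm xm <= r := vseq_cv_vnorm_le (fun k => (xsP (s k)).1) cv.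
have fxm_le : f xm <= - L.
  apply: Rnot_lt_le => lt_L; have gap0 : 0 < (f xm + L) / 2 by lra.
  have [d [d0 lsc]] := f_lsc xm _ gap0.
  have [N1 close] := cv d d0; have [N2 small] := inv_INR_succ_lt gap0.
  pose k := maxn N1 N2.
  have := lsc _ (close k ltac:(lia)).
  have := small (s k) ltac:(have := strict_homo_ge_id s_incr k; lia).
  by have := (xsP (s k)).2; lra.
exists xm => x; case: (Rle_lt_dec (vnorm x) r) => [x_r|lt_rx].
  by have := inf_le x x_r; lra.
by have := f_ge_f0 x lt_rx; have := inf_le vzero ltac:(rewrite vnorm0; lra); lra.
Qed.

Lemma lower_semicontinuous_of_bound n (f F : vec n -> R) :
  scalar_continuous f ->
  (forall x, exists v, forall z, F x - F z <= f x - f z + vdot v (vsub z x)) ->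
  lower_semicontinuous F.
Proof.
move=> f_cont F_bound x eps eps0; have [v Fx_le] := F_bound x.
pose K := 2 * (vnorm v + 1); have K0 : 0 < K by have := vnorm_ge0 v; rewrite /K; lra.
have [d [d0 f_close]] := f_cont x (eps / 2) ltac:(lra).
exists (Rmin d (eps / K)); split; first exact: Rmin_div_pos.
move=> z /(lt_Rmin_div K0)[/f_close /Rabs_def2[_ f_lt] K_lt].
have := Fx_le z; have := vdot_le_vnorm v (vsub z x); have := vnorm_ge0 (vsub z x).
by rewrite /K in K_lt; nra.
Qed.

(** * Differentiable convex functions *)

Lemma has_gradient_directional n (f : vec n -> R) x gx h eps :
  has_gradient f x gx -> 0 < eps ->
  exists t0, 0 < t0 /\ forall t, 0 < t < t0 ->
    t * vdot gx h - eps * t <= f (vadd x (vscale t h)) - f x <= t * vdot gx h + eps * t.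
Proof.
move=> f_grad eps0; pose K := vnorm h + 1; have K0 : 0 < K by have := vnorm_ge0 h; rewrite /K; lra.
have [d [d0 taylor]] := f_grad (eps / K) (Rdiv_lt_0_compat _ _ eps0 K0).
exists (d / K); split; first exact: Rdiv_lt_0_compat.
move=> t [t0 t_lt].
have th_lt : vnorm (vscale t h) < d.
  rewrite vnormZ Rabs_pos_eq; last lra.
  have := Rmult_lt_compat_r K _ _ K0 t_lt.
  by rewrite (_ : d / K * K = d); [rewrite /K; nra|field; lra].
have := taylor _ th_lt; rewrite vdotZr vnormZ (Rabs_pos_eq t); last lra.
have : eps / K * vnorm h <= eps.
  apply: (Rmult_le_reg_r K) => //.
  by rewrite (_ : eps / K * vnorm h * K = eps * vnorm h); [rewrite /K; nra|field; lra].
move=> ? ?; pose a := f (vadd x (vscale t h)) - f x - t * vdot gx h.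
have := Rle_abs a; have := Rle_abs (- a); rewrite Rabs_Ropp /a.
by split; nra.
Qed.

Section DifferentiableConvex.
Variable n : nat.
Variables (phi : vec n -> R) (g : vec n -> vec n).
Hypothesis phi_grad : forall x, has_gradient phi x (g x).
Hypothesis phi_convex : strictly_convex phi.

Lemma has_gradient_continuous : scalar_continuous phi.
Proof.
move=> x eps eps0; have [d1 [d10 taylor]] := phi_grad x Rlt_0_1.
pose K := vnorm (g x) + 2; have K0 : 0 < K by have := vnorm_ge0 (g x); rewrite /K; lra.
exists (Rmin d1 (eps / K)); split; first exact: Rmin_div_pos.
move=> y /(lt_Rmin_div K0)[yx_d1 yx_K].
have := taylor _ yx_d1; rewrite (_ : vadd x (vsub y x) = y); last by vext.
have := Cauchy_Schwarz (g x) (vsub y x); have := vnorm_ge0 (vsub y x).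
have := Rabs_triang (phi y - phi x - vdot (g x) (vsub y x)) (vdot (g x) (vsub y x)).
rewrite (_ : phi y - phi x - _ + _ = phi y - phi x); last by ring.
by rewrite /K in yx_K; nra.
Qed.

Lemma gradient_eq_of_minimizer w x :
  (forall y, phi x - vdot w x <= phi y - vdot w y) -> g x = w.
Proof.
move=> x_min; pose d := vsub w (g x).
suff /vnorm_eq0/vsub_eq0 -> : vnorm d = 0 by [].
have := vnorm_sqr d; have := vnorm_ge0 d.
suff : vdot d d <= 0 by nra.
apply: le_epsilon => eps eps0; rewrite Rplus_0_l.
have [t0 [t00 dir]] := has_gradient_directional d (phi_grad x) eps0.
have [_ dir_t] := dir (t0 / 2) ltac:(lra); have := x_min (vadd x (vscale (t0 / 2) d)).
rewrite vdotDr vdotZr (_ : vdot d d = vdot w d - vdot (g x) d); last by rewrite vdotBl !(vdotC _ d).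
move=> min_t; apply: (Rmult_le_reg_l (t0 / 2)); lra.
Qed.

Lemma convex_gradient_ineq x y : phi x + vdot (g x) (vsub y x) <= phi y.
Proof.
case: (classic (y = x)) => [->|neq_yx].
  by rewrite (_ : vsub x x = vzero) ?vdot0r; [lra|vext].
suff : vdot (g x) (vsub y x) <= phi y - phi x by lra.
apply: le_epsilon => eps eps0.
have [t0 [t00 dir]] := has_gradient_directional (vsub y x) (phi_grad x) eps0.
pose t := Rmin (t0 / 2) (1 / 2).
have t_t0 : 0 < t < t0 by rewrite /t; split; [apply: Rmin_pos|have := Rmin_l (t0 / 2) (1 / 2)]; lra.
have t_1 : 0 < t < 1 by split; [lra|rewrite /t; have := Rmin_r (t0 / 2) (1 / 2)]; lra.
have := phi_convex neq_yx t_1.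
rewrite (_ : vadd (vscale t y) (vscale (1 - t) x) = vadd x (vscale t (vsub y x))); last by vext.
have [dir_t _] := dir t t_t0.
by move=> convex_t; apply: (Rmult_le_reg_l t); lra.
Qed.

Lemma strictly_convex_gradient_ineq x y : y <> x -> phi x + vdot (g x) (vsub y x) < phi y.
Proof.
move=> neq_yx; have := phi_convex neq_yx (ltac:(lra) : 0 < 1 / 2 < 1).
have := convex_gradient_ineq x (vadd (vscale (1 / 2) y) (vscale (1 - 1 / 2) x)).
rewrite (_ : vsub _ x = vscale (1 / 2) (vsub y x)) ?vdotZr; [lra|vext].
Qed.

Lemma gradient_monotone x y : 0 <= vdot (vsub (g x) (g y)) (vsub x y).
Proof.
have := convex_gradient_ineq x y; have := convex_gradient_ineq y x.
by rewrite !(vdotBl, vdotBr); lra.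
Qed.

Lemma gradient_strictly_monotone x y : x <> y -> 0 < vdot (vsub (g x) (g y)) (vsub x y).
Proof.
move=> neq_xy; have := strictly_convex_gradient_ineq (nesym neq_xy).
by have := strictly_convex_gradient_ineq neq_xy; rewrite !(vdotBl, vdotBr); lra.
Qed.

Lemma convex_lower_bound x : phi vzero - vnorm (g vzero) * vnorm x <= phi x.
Proof.
have := convex_gradient_ineq vzero x; rewrite (_ : vsub x vzero = x); last by vext.
by have := Cauchy_Schwarz (g vzero) x; have := Rle_abs (- vdot (g vzero) x); rewrite Rabs_Ropp; lra.
Qed.

Lemma gradient_maximizes_conjugate w y : g y = w ->
  forall y', vdot y' w - phi y' <= vdot y w - phi y.
Proof.
by move=> gy_w y'; have := convex_gradient_ineq y y'; rewrite gy_w vdotBr !(vdotC w); lra.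
Qed.

Hypothesis grad_cont : vcontinuous g.

(* by compactness: a sequence violating the bound has a limit pair [a0 <> b0] with
   [<g a0 - g b0, a0 - b0> = 0] *)
Lemma gradient_uniformly_monotone r eps : 0 < eps ->
  exists c, 0 < c /\ forall a b, vnorm a <= r -> vnorm b <= r -> eps <= vnorm (vsub a b) ->
    c <= vdot (vsub (g a) (g b)) (vsub a b).
Proof.
move=> eps0; apply: NNPP => no_c.
have bad : forall k : nat, exists ab : vec n * vec n,
    [/\ vnorm ab.1 <= r, vnorm ab.2 <= r, eps <= vnorm (vsub ab.1 ab.2) &
         vdot (vsub (g ab.1) (g ab.2)) (vsub ab.1 ab.2) < / (INR k + 1)].
  move=> k; apply: NNPP => no_ab; apply: no_c.
  exists (/ (INR k + 1)); split; first by apply: Rinv_0_lt_compat; have := pos_INR k; lra.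
  by move=> a b a_r b_r ab_eps; apply: Rnot_lt_le => lt_ab; apply: no_ab; exists (a, b).
have [ab abP] := choice _ bad.
have a_r k : vnorm (ab k).1 <= r by case: (abP k).
have b_r k : vnorm (ab k).2 <= r by case: (abP k).
have [s1 [a0 [s1_incr cv_a]]] := Bolzano_Weierstrass_vec a_r.
have [s2 [b0 [s2_incr cv_b]]] := Bolzano_Weierstrass_vec (fun k => b_r (s1 k)).
pose a k := (ab (s1 (s2 k))).1; pose b k := (ab (s1 (s2 k))).2.
have {}cv_a : vseq_cv a a0 by apply: (vseq_cv_subseq (y := fun k => (ab (s1 k)).1)).
have s_ge k : (k <= s1 (s2 k))%N.
  by have := strict_homo_ge_id s1_incr (s2 k); have := strict_homo_ge_id s2_incr k; lia.
have neq_ab0 : a0 <> b0.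
  move=> eq_ab0; rewrite -eq_ab0 in cv_b.
  have [Na close_a] := cv_a (eps / 2) ltac:(lra); have [Nb close_b] := cv_b (eps / 2) ltac:(lra).
  pose k := maxn Na Nb; have [_ _ ab_eps _] := abP (s1 (s2 k)).
  have := close_a k ltac:(lia); have := close_b k ltac:(lia).
  have := vnorm_sub_triangle (a k) a0 (b k); rewrite (vnorm_subC a0).
  by rewrite /a /b in ab_eps *; lra.
have v0 := gradient_strictly_monotone neq_ab0.
set v := vdot (vsub (g a0) (g b0)) (vsub a0 b0) in v0.
have v2 : 0 < v / 2 by lra.
have [N1 close] := vseq_cv_vdot (vseq_cv_sub (vseq_cv_continuous grad_cont cv_a)
  (vseq_cv_continuous grad_cont cv_b)) (vseq_cv_sub cv_a cv_b) v2.
have [N2 small] := inv_INR_succ_lt v2.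
pose k := maxn N1 N2; have [_ _ _ ab_small] := abP (s1 (s2 k)).
have q_small : vdot (vsub (g (a k)) (g (b k))) (vsub (a k) (b k)) < v / 2.
  by have := small _ (leq_trans (leq_maxr N1 N2) (s_ge k)); rewrite /a /b; lra.
have [_ close_k] := Rabs_def2 _ _ (close k (leq_maxl N1 N2)).
by move: q_small close_k; rewrite /a /b /v; lra.
Qed.

End DifferentiableConvex.

Lemma superlinear_lower_bound n (f : vec n -> R) M : superlinear f ->
  exists r, 0 <= r /\ forall x, r < vnorm x -> M * vnorm x < f x.
Proof.
move=> f_sl; have [r [r0 f_gt]] := f_sl M; exists r; split => // x lt_rx.
have x0 : 0 < vnorm x by lra.
have := Rmult_lt_compat_r _ _ _ x0 (f_gt x lt_rx).
by rewrite (_ : f x / vnorm x * vnorm x = f x) //; field; lra.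
Qed.

Section SuperlinearConvex.
Variable n : nat.
Variables (phi : vec n -> R) (g : vec n -> vec n).
Hypothesis phi_grad : forall x, has_gradient phi x (g x).
Hypothesis phi_convex : strictly_convex phi.
Hypothesis phi_superlinear : superlinear phi.

Lemma gradient_surjective w : exists y, g y = w.
Proof.
have [r0 [r00 phi_gt]] := superlinear_lower_bound (vnorm w + 1) phi_superlinear.
pose r := Rmax r0 (Rabs (phi vzero)).
have r_r0 : r0 <= r := Rmax_l _ _; have r_phi0 : Rabs (phi vzero) <= r := Rmax_r _ _.
have w0 := vnorm_ge0 w; have g00 := vnorm_ge0 (g vzero).
suff [y y_min] : exists y, forall x, phi y - vdot w y <= phi x - vdot w x.
  by exists y; apply: (gradient_eq_of_minimizer phi_grad y_min).
apply: (@coercive_lsc_attains_min _ _ r (phi vzero - (vnorm (g vzero) + vnorm w) * r)); first lra.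
- move=> x x_r; have := convex_lower_bound phi_grad phi_convex x.
  by have := vdot_le_vnorm w x; have := vnorm_ge0 x; nra.
- move=> x lt_rx; have := phi_gt x ltac:(lra); have := vdot_le_vnorm w x.
  by have := Rle_abs (phi vzero); rewrite vdot0r; nra.
- apply: (lower_semicontinuous_of_bound (has_gradient_continuous phi_grad)) => x.
  by exists w => z; rewrite vdotBr; lra.
Qed.

Lemma gradient_preimage_bounded W : exists r, 0 <= r /\ forall y, vnorm (g y) <= W -> vnorm y <= r.
Proof.
have [r0 [r00 phi_gt]] := superlinear_lower_bound (W + Rabs (phi vzero) + 1) phi_superlinear.
exists (Rmax r0 1); split; first by have := Rmax_r r0 1; lra.
move=> y gy_W; apply: Rnot_lt_le => lt_y.
have := phi_gt y (Rle_lt_trans _ _ _ (Rmax_l r0 1) lt_y); have := Rmax_r r0 1.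
have := convex_gradient_ineq phi_grad phi_convex y vzero.
rewrite (_ : vsub vzero y = vscale (-1) y) ?vdotZr; last by vext.
have := vdot_le_vnorm (g y) y; have := Rle_abs (phi vzero); have := Rabs_pos (phi vzero).
by have := Rmult_le_compat_r _ _ _ (vnorm_ge0 y) gy_W; nra.
Qed.

Hypothesis grad_cont : vcontinuous g.

Lemma gradient_inverse_continuous w eps : 0 < eps ->
  exists d, 0 < d /\ forall y y', g y = w -> vnorm (vsub (g y') w) < d -> vnorm (vsub y' y) < eps.
Proof.
move=> eps0; have [r [r0 r_bound]] := gradient_preimage_bounded (vnorm w + 1).
have [c [c0 unif]] := gradient_uniformly_monotone phi_grad phi_convex grad_cont r eps0.
pose K := 2 * r + 1.
have K0 : 0 < K by rewrite /K; lra.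
exists (Rmin 1 (c / K)); split; first by apply: Rmin_div_pos; lra.
move=> y y' gy_w /(lt_Rmin_div K0)[close_1 close_K]; apply: Rnot_le_lt => le_eps.
have y_r : vnorm y <= r by apply: r_bound; rewrite gy_w; lra.
have y'_r : vnorm y' <= r by apply: r_bound; have := vnorm_le_sub (g y') w; lra.
have := unif y' y y'_r y_r le_eps; rewrite gy_w.
have := vdot_le_vnorm (vsub (g y') w) (vsub y' y).
have : vnorm (vsub y' y) <= K by have := vnorm_sub_le y' y; rewrite /K; lra.
by have := vnorm_ge0 (vsub (g y') w); have := vnorm_ge0 (vsub y' y); nra.
Qed.

End SuperlinearConvex.

(** * Existence of an equilibrium *)

Section Equilibrium.
Variable n : nat.
Variables (phi : vec n -> R) (g : vec n -> vec n) (J : mat n n).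
Hypothesis phi_grad : forall x, has_gradient phi x (g x).
Hypothesis grad_cont : vcontinuous g.
Hypothesis phi_convex : strictly_convex phi.
Hypothesis phi_superlinear : superlinear phi.
Hypothesis J_skew : skew J.
Variable ginv : vec n -> vec n.
Hypothesis ginvK : forall w, g (ginv w) = w.

(* the Legendre transform of [phi], the supremum being attained at [ginv w] *)
Let phi_star w := vdot (ginv w) w - phi (ginv w).

Lemma phi_star_ge y w : vdot y w - phi y <= phi_star w.
Proof. exact: (gradient_maximizes_conjugate phi_grad phi_convex (ginvK w) y). Qed.

(* [H x >= <x, J x> = 0] by Fenchel-Young, with equality iff [g x = J x] *)
Let H x := phi x + phi_star (mxv J x).

Lemma H_attains_min : exists xb, forall x, H xb <= H x.
Proof.
have H_ge x : phi x - phi vzero <= H x.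
  by have := phi_star_ge vzero (mxv J x); rewrite vdot0l /H; lra.
have [r0 [r00 phi_gt]] := superlinear_lower_bound 1 phi_superlinear.
pose r := Rmax r0 (Rabs (H vzero) + Rabs (phi vzero)).
have r_r0 : r0 <= r := Rmax_l _ _; have r_H : Rabs (H vzero) + Rabs (phi vzero) <= r := Rmax_r _ _.
have g00 := vnorm_ge0 (g vzero).
apply: (@coercive_lsc_attains_min _ _ r (- vnorm (g vzero) * r)); first lra.
- move=> x x_r; have := H_ge x; have := convex_lower_bound phi_grad phi_convex x.
  by have := vnorm_ge0 x; nra.
- move=> x lt_rx; have := H_ge x; have := phi_gt x ltac:(lra).
  by have := Rle_abs (H vzero); have := Rle_abs (phi vzero); lra.
- apply: (lower_semicontinuous_of_bound (has_gradient_continuous phi_grad)) => x.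
  pose y := ginv (mxv J x); exists (mxv J y) => z.
  have := phi_star_ge y (mxv J z); have := skew_vdot_mxv J_skew y (vsub z x).
  by rewrite mxvB vdotBr /H /phi_star -/y; lra.
Qed.

(* Danskin's argument: moving [xb] along [d] changes [H] at rate [-|d|^2], using the
   continuity of [ginv] to control the maximizer of [phi_star] *)
Lemma H_min_first_order xb : (forall x, H xb <= H x) -> g xb = mxv J (ginv (mxv J xb)).
Proof.
move=> xb_min; pose yb := ginv (mxv J xb); pose d := vsub (mxv J yb) (g xb).
pose Jd := mxv J d; have Jd0 := vnorm_ge0 Jd.
suff dd0 : vdot d d <= 0.
  have /vnorm_eq0/vsub_eq0 -> // : vnorm d = 0.
  by rewrite /vnorm (Rle_antisym _ _ dd0 (vdot_ge0 d)) sqrt_0.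
apply: le_epsilon => eps eps0; rewrite Rplus_0_l.
have [t0 [t00 dir]] := has_gradient_directional d (phi_grad xb) (ltac:(lra) : 0 < eps / 2).
pose eps' := eps / (2 * (vnorm Jd + 1)).
have eps'0 : 0 < eps' by apply: Rdiv_lt_0_compat; lra.
have [d2 [d20 ginv_close]] := gradient_inverse_continuous phi_grad phi_convex phi_superlinear
  grad_cont (mxv J xb) eps'0.
pose t := Rmin (t0 / 2) (d2 / (vnorm Jd + 1)).
have t_pos : 0 < t by apply: Rmin_pos; [lra|apply: Rdiv_lt_0_compat; lra].
have t_t0 : t < t0 by have := Rmin_l (t0 / 2) (d2 / (vnorm Jd + 1)); rewrite -/t; lra.
have t_d2 : t * vnorm Jd < d2.
  have := Rmult_le_compat_r (vnorm Jd + 1) _ _ ltac:(lra) (Rmin_r (t0 / 2) (d2 / (vnorm Jd + 1))).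
  by rewrite -/t (_ : d2 / (vnorm Jd + 1) * (vnorm Jd + 1) = d2); [nra|field; lra].
pose xt := vadd xb (vscale t d); pose yt := ginv (mxv J xt).
have J_xt : mxv J xt = vadd (mxv J xb) (vscale t Jd) by rewrite mxvD mxvZ.
have yt_close : vnorm (vsub yt yb) < eps'.
  apply: ginv_close; rewrite ?ginvK // J_xt (_ : vsub _ _ = vscale t Jd); last by vext.
  by rewrite vnormZ Rabs_pos_eq; lra.
have H_incr : 0 <= phi xt - phi xb + t * vdot yt Jd.
  have := xb_min xt; have := phi_star_ge yt (mxv J xb).
  by rewrite /H /phi_star -/yt J_xt vdotDr vdotZr; lra.
have yt_Jd : vdot yt Jd <= - vdot (mxv J yb) d + eps / 2.
  have := skew_vdot_mxv J_skew yb d; rewrite -/Jd => skew_yb.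
  rewrite (_ : vdot yt Jd = vdot yb Jd + vdot (vsub yt yb) Jd); last by rewrite vdotBl; ring.
  have : vnorm (vsub yt yb) * vnorm Jd <= eps / 2.
    have : eps' * (vnorm Jd + 1) = eps / 2 by rewrite /eps'; field; lra.
    by have := vnorm_ge0 (vsub yt yb); nra.
  by have := vdot_le_vnorm (vsub yt yb) Jd; lra.
have dd : vdot d d = vdot (mxv J yb) d - vdot (g xb) d by rewrite vdotBl.
have [_ phi_xt] := dir t (conj t_pos t_t0); rewrite -/xt in phi_xt.
have : t * vdot d d <= t * eps by nra.
exact: Rmult_le_reg_l.
Qed.

Lemma skew_equilibrium_exists : exists x, g x = mxv J x.
Proof.
have [xb /H_min_first_order g_xb] := H_attains_min; pose yb := ginv (mxv J xb).
case: (classic (xb = yb)) => [eq_xy|neq_xy]; first by exists xb; rewrite g_xb -/yb -eq_xy.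
have := gradient_strictly_monotone phi_grad phi_convex neq_xy.
rewrite g_xb ginvK -mxvB (_ : vsub yb xb = vscale (-1) (vsub xb yb)); last by vext.
by rewrite mxvZ vdotZl vdotC skew_vdot_mxv_self //; lra.
Qed.

End Equilibrium.

Lemma gradient_skew_equilibrium n (phi : vec n -> R) g J :
  C1_with_gradient phi g -> strictly_convex phi -> superlinear phi -> skew J ->
  exists x, g x = mxv J x.
Proof.
move=> [phi_grad grad_cont] phi_convex phi_superlinear J_skew.
have [ginv ginvK] := choice _ (gradient_surjective phi_grad phi_convex phi_superlinear).
exact: (skew_equilibrium_exists phi_grad grad_cont phi_convex phi_superlinear J_skew ginvK).
Qed.

(** * The Lyapunov function |x - xs|^2 *)

Lemma derivable_pt_lim_big n (r : seq 'I_n) (P : pred 'I_n) (f : 'I_n -> R -> R) f' t :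
  (forall i, derivable_pt_lim (f i) t (f' i)) ->
  derivable_pt_lim (fun s => \big[Rplus/0]_(i <- r | P i) f i s) t
    (\big[Rplus/0]_(i <- r | P i) f' i).
Proof.
move=> f_der; elim: r => [|a r IH].
  rewrite big_nil; apply: (derivable_pt_lim_ext (fct_cte 0)); last exact: derivable_pt_lim_const.
  by move=> s; rewrite big_nil.
rewrite big_cons; case Pa: (P a).
- apply: (derivable_pt_lim_ext (fun s => f a s + \big[Rplus/0]_(i <- r | P i) f i s)).
    by move=> s; rewrite big_cons Pa.
  exact: derivable_pt_lim_plus.
- by apply: (derivable_pt_lim_ext _ _ _ _ _ IH) => s; rewrite big_cons Pa.
Qed.

Lemma derivable_pt_lim_sqr_dist n (x : R -> vec n) (xs x' : vec n) t :
  (forall i, derivable_pt_lim (fun s => x s i) t (x' i)) ->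
  derivable_pt_lim (fun s => vdot (vsub (x s) xs) (vsub (x s) xs)) t (2 * vdot (vsub (x t) xs) x').
Proof.
move=> x_der.
have -> : 2 * vdot (vsub (x t) xs) x' =
    \sum_(i < n) ((x' i - 0) * (x t i - xs i) + (x t i - xs i) * (x' i - 0)).
  by rewrite /vdot -sumR_mull; apply: eq_bigr => i _; rewrite /vsub; ring.
apply: (@derivable_pt_lim_big n _ _ (fun i s => (x s i - xs i) * (x s i - xs i))) => i.
have xi_der := derivable_pt_lim_minus _ _ _ _ _ (x_der i) (derivable_pt_lim_const (xs i) t).
exact: (derivable_pt_lim_mult _ _ _ _ _ xi_der xi_der).
Qed.

Section Lyapunov.
Variable n : nat.
Variables (phi : vec n -> R) (g : vec n -> vec n) (J : mat n n).
Hypothesis phi_grad : forall x, has_gradient phi x (g x).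
Hypothesis phi_convex : strictly_convex phi.
Hypothesis grad_cont : vcontinuous g.
Hypothesis J_skew : skew J.
Variables (xs : vec n) (t0 : R) (x : R -> vec n).
Hypothesis x_der : forall t, t0 < t -> forall i,
  derivable_pt_lim (fun s => x s i) t
    (vadd (vscale (-1) (vsub (g (x t)) (g xs))) (mxv J (vsub (x t) xs)) i).

Let V s := vdot (vsub (x s) xs) (vsub (x s) xs).
Let V' t := - 2 * vdot (vsub (g (x t)) (g xs)) (vsub (x t) xs).

Lemma sqr_dist_derivative t : t0 < t -> derivable_pt_lim V t (V' t).
Proof.
move=> lt_t; have := derivable_pt_lim_sqr_dist xs (x_der lt_t).
rewrite vdotDr vdotZr skew_vdot_mxv_self // (vdotC (vsub _ xs)) /V'.
by congr derivable_pt_lim; ring.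
Qed.

Lemma sqr_dist_nonincreasing a c : t0 < a -> a <= c -> V c <= V a.
Proof.
move=> lt_a /Rle_lt_or_eq_dec[lt_ac|->]; last lra.
have [z [V_mvt [lt_az lt_zc]]] :=
  MVT_cor2 V V' a c lt_ac (fun z z_ac => sqr_dist_derivative (t := z) ltac:(lra)).
by have := gradient_monotone phi_grad phi_convex (x z) xs; rewrite /V' in V_mvt; nra.
Qed.

(* If [x] stayed [eps]-far from [xs], uniform monotonicity would give [V' <= -2c < 0]
   on [[t0 + 1, +oo)], driving [V] negative. *)
Lemma sqr_dist_eventually_small eps : 0 < eps ->
  exists T, t0 + 1 <= T /\ vnorm (vsub (x T) xs) < eps.
Proof.
move=> eps0; apply: NNPP => never_small.
have far t : t0 + 1 <= t -> eps <= vnorm (vsub (x t) xs).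
  by move=> le_t; apply: Rnot_lt_le => lt_eps; apply: never_small; exists t.
pose r := vnorm (vsub (x (t0 + 1)) xs); have r0 : 0 <= r := vnorm_ge0 _.
have x_r t : t0 + 1 <= t -> vnorm (x t) <= r + vnorm xs.
  move=> le_t; have := vnorm_le_sub (x t) xs.
  suff : vnorm (vsub (x t) xs) <= r by lra.
  by apply: sqrt_le_1_alt; apply: sqr_dist_nonincreasing => //; lra.
have [c [c0 unif]] := gradient_uniformly_monotone phi_grad phi_convex grad_cont (r + vnorm xs) eps0.
have V'_le t : t0 + 1 <= t -> V' t <= -2 * c.
  move=> le_t; have := unif (x t) xs (x_r t le_t) ltac:(lra) (far t le_t).
  by rewrite /V'; lra.
pose s := V (t0 + 1) / (2 * c) + 1.
have s0 : 0 < s.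
  have : 0 <= V (t0 + 1) / (2 * c) by apply: Rle_mult_inv_pos; [exact: vdot_ge0|lra].
  by rewrite /s; lra.
have cs : 2 * c * s = V (t0 + 1) + 2 * c by rewrite /s; field; lra.
have [z [V_mvt [lt_z lt_z']]] := MVT_cor2 V V' (t0 + 1) (t0 + 1 + s) ltac:(lra)
  (fun z z_s => sqr_dist_derivative (t := z) ltac:(lra)).
have := V'_le z ltac:(lra); have := vdot_ge0 (vsub (x (t0 + 1 + s)) xs).
by rewrite /V in V_mvt cs *; nra.
Qed.

Lemma solution_converges : converges_to x xs.
Proof.
move=> eps /sqr_dist_eventually_small[T [le_T small_T]]; exists T => t le_Tt.
suff : vnorm (vsub (x t) xs) <= vnorm (vsub (x T) xs) by lra.
by apply: sqrt_le_1_alt; apply: sqr_dist_nonincreasing => //; lra.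
Qed.

End Lyapunov.

Section LinearPerturbation.
Variable n : nat.
Variables (psi : vec n -> R) (grad : vec n -> vec n) (b : vec n).

Let phi x := psi x - vdot b x.

Lemma C1_with_gradient_sub_linear :
  C1_with_gradient psi grad -> C1_with_gradient phi (fun x => vsub (grad x) b).
Proof.
move=> [psi_grad grad_cont]; split.
- move=> x eps /(psi_grad x)[d [d0 taylor]]; exists d; split => // h /taylor.
  by rewrite /phi vdotDr vdotBl (vdotC b h); congr (Rabs _ <= _); ring.
- move=> x eps /(grad_cont x)[d [d0 close]]; exists d; split => // y /close.
  by rewrite (_ : vsub (vsub (grad y) b) (vsub (grad x) b) = vsub (grad y) (grad x)) //; vext.
Qed.

Lemma strictly_convex_sub_linear : strictly_convex psi -> strictly_convex phi.
Proof.
move=> psi_convex x y neq_xy l l01; have := psi_convex x y neq_xy l l01.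
by rewrite /phi vdotDr !vdotZr; lra.
Qed.

Lemma superlinear_sub_linear : superlinear psi -> superlinear phi.
Proof.
move=> psi_sl M; have [r [r0 psi_gt]] := superlinear_lower_bound (M + vnorm b) psi_sl.
exists r; split => // x lt_rx; have x0 : 0 < vnorm x by lra.
apply: (Rmult_lt_reg_r (vnorm x)) => //.
rewrite (_ : phi x / vnorm x * vnorm x = phi x); last by field; lra.
by have := psi_gt x lt_rx; have := vdot_le_vnorm b x; rewrite /phi; lra.
Qed.

End LinearPerturbation.

Unset Implicit Arguments.

Theorem mainTheorem11 (n m : nat) (psi : vec n -> R) (grad : vec n -> vec n)
    (J : mat n n) (B : mat n m) (u : vec m) :
  C1_with_gradient psi grad ->
  strictly_convex psi ->
  superlinear psi ->
  skew J ->
  exists x0 : vec n,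
    (forall (t0 : R) (x : R -> vec n), is_solution grad J B u t0 x -> converges_to x x0) /\
    (forall y0 : vec n,
       (forall (t0 : R) (x : R -> vec n), is_solution grad J B u t0 x -> converges_to x y0) ->
       y0 = x0).
Proof.
move=> psi_C1 psi_convex psi_superlinear J_skew; pose b := mxv B u.
have [xs eq_xs] := gradient_skew_equilibrium (C1_with_gradient_sub_linear b psi_C1)
  (strictly_convex_sub_linear b psi_convex) (superlinear_sub_linear b psi_superlinear) J_skew.
have xs_at_rest i : - grad xs i + mxv J xs i + mxv B u i = 0.
  by have := f_equal (fun v => v i) eq_xs; rewrite /vsub /b /=; lra.
have field_around_xs x i : - grad x i + mxv J x i + mxv B u i =
    vadd (vscale (-1) (vsub (grad x) (grad xs))) (mxv J (vsub x xs)) i.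
  by rewrite mxvB /vadd /vscale /vsub; have := xs_at_rest i; lra.
exists xs; split.
  move=> t0 x x_sol; have [psi_grad grad_cont] := psi_C1.
  apply: (solution_converges psi_grad psi_convex grad_cont J_skew (t0 := t0)) => t lt_t i.
  by rewrite -field_around_xs; exact: x_sol t lt_t i.
move=> y0 y0_attracts; apply: converges_to_const_eq; apply: (y0_attracts 0) => t _ i.
by rewrite xs_at_rest; apply: derivable_pt_lim_const.
Qed.
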